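(* Let $n>1$, $m\ge1$ and let $v\in Z_{n,m}$ with $\operatorname{Piv}(v)=\{-1,m+1\}$. Then $\operatorname{ps}_{m+1}(v)=\sum_{i=0}^{m+1}i\,v_i$, $\operatorname{ps}_{-1}(v)=\sum_{i=0}^{m+1}(m+1-i)v_i$, and $d(v,0)\leq\lfloor\frac{n(m+1)}{2}\rfloor$.
   Context: Elements of $\mathbb{Z}_n$ are identified with representatives in $\{0,\dots,n-1\}$ (so $v_0,v_{m+1}$ are such integers in sums). $Z_{n,m}$ has vertices $u=(u_0,\dots,u_{m+1})\in\mathbb{Z}_n\times\{-1,0,1\}^m\times\mathbb{Z}_n$ with $\sum u_i\equiv0\pmod n$. A step from $v$ to $u$ is a left shift at $i$ ($0\le i\le m$) if $u_j=v_j$ for $j\notin\{i,i+1\}$, $u_i=v_i+1$, $u_{i+1}=v_{i+1}-1$, and a right shift at $i$ if $u_i=v_i-1$, $u_{i+1}=v_{i+1}+1$ (arithmetic in coordinates $0,m+1$ in $\mathbb{Z}_n$); vertices are adjacent iff related by such a shift. $d$ is graph distance, $0$ the all-zero vertex. $\operatorname{Piv}(v)$ is the set of integers $-1\le p\le m+1$ with $n\mid\sum_{i=0}^p v_i$ (empty sum $=0$). For a path $P$ from $v$ to $0$: $0\le p\le m$ is a wall if no step is a shift at $p$; $-1$ is a wall if no step is a left shift at $0$; $m+1$ is a wall if no step is a right shift at $m$. $\operatorname{ps}_p(v)$ is the minimum length of a path from $v$ to $0$ having $p$ as a wall. *)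

From mathcomp Require Import all_boot all_order all_algebra.
Set Implicit Arguments. Unset Strict Implicit. Unset Printing Implicit Defensive.
Import Order.TTheory GRing.Theory Num.Theory.
Local Open Scope ring_scope.

(* A vertex of Z_{n,m} is encoded as a sequence of m+2 integers
   (u_0,...,u_{m+1}); u_0 and u_{m+1} are the representatives in {0..n-1}
   of elements of Z_n, the middle entries lie in {-1,0,1}. *)
Definition zcoord (u : seq int) (i : nat) : int := nth 0 u i.

Definition is_vertex (n m : nat) (u : seq int) : bool :=
  [&& size u == m.+2,
      (0 <= zcoord u 0) && (zcoord u 0 < n%:Z),
      (0 <= zcoord u m.+1) && (zcoord u m.+1 < n%:Z),
      all (fun i => zcoord u i \in [:: -1; 0; 1]) (iota 1 m)
    & (n%:Z %| \sum_(i < m.+2) zcoord u i)%Z].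

Definition zerov (m : nat) : seq int := nseq m.+2 0.

Definition adj (n m j : nat) (x : int) : int :=
  if (j == 0%N) || (j == m.+1) then (x %% n%:Z)%Z else x.

(* the step from v to u is a shift at i in direction e (e = 1 : left,
   e = -1 : right): u_i = v_i + e, u_{i+1} = v_{i+1} - e, others equal;
   both endpoints must be vertices *)
Definition shift (n m : nat) (e : int) (i : nat) (v u : seq int) : bool :=
  [&& is_vertex n m v, is_vertex n m u, (i <= m)%N,
      zcoord u i == adj n m i (zcoord v i + e),
      zcoord u i.+1 == adj n m i.+1 (zcoord v i.+1 - e)
    & all (fun j => (j == i) || (j == i.+1) || (zcoord u j == zcoord v j))
          (iota 0 m.+2)].

Definition lshift n m i v u := shift n m 1 i v u.
Definition rshift n m i v u := shift n m (-1) i v u.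

Definition shift_at n m i v u := lshift n m i v u || rshift n m i v u.

Definition adjacent n m (v u : seq int) : bool :=
  has (fun i => shift_at n m i v u) (iota 0 m.+1).

(* a path from v to w: v :: s is the vertex sequence, its length is size s *)
Definition is_path n m (v w : seq int) (s : seq (seq int)) : bool :=
  is_vertex n m v && path (adjacent n m) v s && (last v s == w).

Definition steps (v : seq int) (s : seq (seq int)) := zip (v :: s) s.

Definition is_wall n m (p : int) (v : seq int) (s : seq (seq int)) : bool :=
  if p == -1 then all (fun st => ~~ lshift n m 0 st.1 st.2) (steps v s)
  else if p == (m.+1)%:Z then all (fun st => ~~ rshift n m m st.1 st.2) (steps v s)
  else (0 <= p <= m%:Z) &&
       all (fun st => ~~ shift_at n m (absz p) st.1 st.2) (steps v s).

Definition ps_is n m (p : int) (v : seq int) (k : int) : Prop :=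
  (exists s, [/\ is_path n m v (zerov m) s, is_wall n m p v s & (size s)%:Z = k])
  /\ (forall s, is_path n m v (zerov m) s -> is_wall n m p v s -> k <= (size s)%:Z).

Definition dist_is n m (v w : seq int) (d : nat) : Prop :=
  (exists s, is_path n m v w s /\ size s = d)
  /\ (forall s, is_path n m v w s -> (d <= size s)%N).

Definition piv n m (v : seq int) (p : int) : Prop :=
  (-1 <= p <= (m.+1)%:Z) /\ (n%:Z %| \sum_(i < (absz (p + 1))) zcoord v i)%Z.

(* A vertex u is tracked by a height function T (is_height): T 0 agrees with
   u_0 modulo n and u_j = T j - T (j-1) for 0 < j <= m; for v itself the
   partial sums S_p = psum v p serve.  A left (right) shift at i <= m raises
   (lowers) T i by one and leaves the other heights alone, so every step changes
   sum_(p <= m) T p by exactly one, and at the zero vertex all heights are equal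
   to one multiple of n.  Since Piv(v) = {-1, m+1}, we have 1 <= S_p <= n-1 for
   p <= m and S_(m+1) = n.  Along a path with wall m+1 the height T m never
   decreases, so the final common height is at least n and the path needs at
   least sum_p (n - S_p) steps; shifting left at a lowest height, repeatedly,
   reaches 0 in exactly that many steps without ever shifting right.  The wall
   -1 is symmetric, with sum_p S_p, and summation by parts turns both sums into
   the weighted sums of the statement.  The two paths have total length n(m+1),
   so d(v,0) is at most half of it. *)

From Pilot Require Import Defs.
From mathcomp Require Import all_boot all_order all_algebra.
From mathcomp Require Import zify ring.
From Stdlib Require Import Classical Wf_nat.
Set Implicit Arguments. Unset Strict Implicit.
Import Order.TTheory GRing.Theory Num.Theory.
Local Open Scope ring_scope.

Lemma dvdz_cases (n : nat) (x : int) :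
  (n%:Z %| x)%Z -> x = 0 \/ n%:Z <= x \/ x <= - n%:Z.
Proof. by move=> /dvdzP [q ->]; case: (ltgtP q 0) => [hq|hq|->]; nia. Qed.

Lemma mem_m101 (x : int) : (x \in [:: -1; 0; 1]) = (-1 <= x <= 1).
Proof.
rewrite !inE; apply/idP/idP; first by case/or3P => /eqP ->.
by move=> hx; have [->|[->|->]] : x = -1 \/ x = 0 \/ x = 1 by lia.
Qed.

Lemma sumr_except2 N i (f g : nat -> int) : (i.+1 < N)%N ->
  (forall j, j != i -> j != i.+1 -> f j = g j) ->
  \sum_(j < N) f j = \sum_(j < N) g j + (f i - g i) + (f i.+1 - g i.+1).
Proof.
move=> hN fg; apply/eqP; rewrite -addrA addrC -subr_eq -sumrB.
rewrite (bigD1 (Ordinal (ltnW hN))) //= (bigD1 (Ordinal hN)) /=; last first.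
  by rewrite -val_eqE /= eq_sym neq_ltn ltnSn.
rewrite big1 ?addr0 // => j /andP [ji ji1].
by rewrite fg ?subrr // -(val_eqE j) /=.
Qed.

Lemma exists_minn (P : nat -> Prop) : (exists k, P k) ->
  exists d, P d /\ forall k, P k -> (d <= k)%N.
Proof.
move=> hP; have [d [[Pd dmin] _]] :=
  dec_inh_nat_subset_has_unique_least_element P (fun k => classic (P k)) hP.
by exists d; split=> // k /dmin; lia.
Qed.

Lemma ex_argmax_le m (F : nat -> int) :
  exists2 i, (i <= m)%N & forall p, (p <= m)%N -> F p <= F i.
Proof.
case: (@arg_maxP _ _ _ (ord0 : 'I_m.+1) xpredT (fun q => F q) isT) => i _ F_max.
by exists i => [|p hp]; [rewrite -ltnS | exact: (F_max (Ordinal (hp : (p < m.+1)%N)))].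
Qed.

Section Shifts.
Variables (n m : nat).

Lemma zcoord_zerov j : zcoord (zerov m) j = 0.
Proof. by rewrite /zcoord /zerov nth_nseq; case: ifP. Qed.

Lemma adj_inner j x : (0 < j <= m)%N -> adj n m j x = x.
Proof. by rewrite /adj; case: ifP => // /orP[] /eqP ->; lia. Qed.

Lemma adj_dvd j x : (n%:Z %| adj n m j x - x)%Z.
Proof. by rewrite -eqz_mod_dvd /adj; case: ifP => _ //; apply/eqP/modz_mod. Qed.

Lemma vertexP u : is_vertex n m u ->
  [/\ size u = m.+2, 0 <= zcoord u 0 < n%:Z, 0 <= zcoord u m.+1 < n%:Z,
      forall i, (0 < i <= m)%N -> -1 <= zcoord u i <= 1
    & (n%:Z %| \sum_(i < m.+2) zcoord u i)%Z].
Proof.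
case/and5P => /eqP su u0 um1 /allP inner su_dvd; split => // i hi.
by rewrite -mem_m101; apply: inner; rewrite mem_iota add1n ltnS.
Qed.

Lemma shiftP (e : int) i u u' : shift n m e i u u' ->
  [/\ is_vertex n m u, is_vertex n m u', (i <= m)%N,
      zcoord u' i = adj n m i (zcoord u i + e) /\
      zcoord u' i.+1 = adj n m i.+1 (zcoord u i.+1 - e)
    & forall j, (j < m.+2)%N -> j != i -> j != i.+1 -> zcoord u' j = zcoord u j].
Proof.
case/and5P => hu hu' hi /eqP ui /andP [/eqP ui1 /allP others]; split => // j hj ji ji1.
by move: (others j); rewrite mem_iota hj (negbTE ji) (negbTE ji1) => /(_ isT) /eqP.
Qed.

Definition shifted (u : seq int) i (e : int) : seq int :=
  set_nth 0 (set_nth 0 u i (adj n m i (zcoord u i + e))) i.+1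
    (adj n m i.+1 (zcoord u i.+1 - e)).

Lemma zcoord_shifted u i (e : int) j : zcoord (shifted u i e) j =
  if j == i.+1 then adj n m i.+1 (zcoord u i.+1 - e)
  else if j == i then adj n m i (zcoord u i + e) else zcoord u j.
Proof. by rewrite /zcoord /shifted nth_set_nth /= nth_set_nth. Qed.

Section LargeModulus.
Hypothesis n_gt1 : (1 < n)%N.

Lemma adj_unit_neq j (x e : int) : (e = 1 \/ e = -1) -> adj n m j (x + e) != x.
Proof.
move=> e_unit; apply/eqP => hx; have := adj_dvd j (x + e).
by rewrite hx opprD addNKr rpredN => /dvdz_cases; case: e_unit => ->; lia.
Qed.

Lemma shift_index_uniq (e e' : int) i i' u u' :
  (e = 1 \/ e = -1) -> (e' = 1 \/ e' = -1) ->
  shift n m e i u u' -> shift n m e' i' u u' -> i = i'.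
Proof.
move=> e_unit e'_unit /shiftP [_ _ hi [ui _] same] /shiftP [_ _ hi' [ui' _] same'].
have moved j (f : int) : (f = 1 \/ f = -1) -> zcoord u' j = adj n m j (zcoord u j + f) ->
    zcoord u' j <> zcoord u j.
  by move=> f_unit -> /eqP; rewrite (negbTE (adj_unit_neq _ _ f_unit)).
case: (ltngtP i i') => // [lt|gt].
- by case: (moved i e e_unit ui); apply: same'; rewrite ?ltnS //; apply/eqP; lia.
- by case: (moved i' e' e'_unit ui'); apply: same; rewrite ?ltnS //; apply/eqP; lia.
Qed.

Lemma shift_dir_uniq (e e' : int) i i' u u' : (1 <= m)%N ->
  (e = 1 \/ e = -1) -> (e' = 1 \/ e' = -1) ->
  shift n m e i u u' -> shift n m e' i' u u' -> e = e'.
Proof.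
move=> m_gt0 e_unit e'_unit sh sh'; have ii' := shift_index_uniq e_unit e'_unit sh sh'.
subst i'; case/shiftP: sh => _ _ hi [ui ui1] _; case/shiftP: sh' => _ _ _ [ui' ui1'] _.
have [i0|i_gt0] := posnP i.
- by subst i; move: ui1 ui1'; rewrite !adj_inner // => -> /eqP; lia.
- by move: ui ui'; rewrite !adj_inner ?i_gt0 // => -> /eqP; lia.
Qed.

Lemma adj_end_bounds j x : (j == 0%N) || (j == m.+1) -> 0 <= adj n m j x < n%:Z.
Proof.
have n_gt0 : 0 < n%:Z by lia.
by rewrite /adj => ->; rewrite modz_ge0 ?ltz_pmod // gt_eqF.
Qed.

Section ShiftedVertex.
Variables (e : int) (i : nat) (u : seq int).
Hypotheses (hu : is_vertex n m u) (hi : (i <= m)%N).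
Hypothesis ui_ok : (0 < i)%N -> -1 <= zcoord u i + e <= 1.
Hypothesis ui1_ok : (i < m)%N -> -1 <= zcoord u i.+1 - e <= 1.

Lemma is_vertex_shifted : is_vertex n m (shifted u i e).
Proof.
have [su u0 um1 inner su_dvd] := vertexP hu.
apply/and5P; split.
- by rewrite !size_set_nth su; apply/eqP; lia.
- rewrite zcoord_shifted /=; case: eqP => [<-|_] //.
  exact: adj_end_bounds.
- rewrite zcoord_shifted eqSS; case: eqP => [<-|_].
    by apply: adj_end_bounds; rewrite eqxx orbT.
  by rewrite (_ : (m.+1 == i) = false) //; apply/eqP; lia.
- apply/allP => j; rewrite mem_iota zcoord_shifted mem_m101 => hj.
  case: eqP => [ji1|_]; first by rewrite adj_inner ?ui1_ok; lia.
  case: eqP => [ji|_]; first by rewrite adj_inner ?ui_ok; lia.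
  by apply: inner; lia.
- rewrite (@sumr_except2 m.+2 i _ (zcoord u)) //; last first.
    by move=> j ji ji1; rewrite zcoord_shifted (negbTE ji) (negbTE ji1).
  rewrite !zcoord_shifted eqxx (_ : (i == i.+1) = false) ?eqxx; last by apply/eqP; lia.
  set a := adj n m i _; set b := adj n m i.+1 _.
  rewrite (_ : _ + (a - _) + _ = \sum_(j < m.+2) zcoord u j + (a - (zcoord u i + e))
                                 + (b - (zcoord u i.+1 - e))); last by ring.
  by apply: rpredD; [apply: rpredD|]; rewrite ?adj_dvd.
Qed.

Lemma shift_shifted : shift n m e i u (shifted u i e).
Proof.
apply/and5P; split => //; first exact: is_vertex_shifted.
- by rewrite zcoord_shifted (_ : (i == i.+1) = false) ?eqxx //; apply/eqP; lia.
apply/andP; split; first by rewrite zcoord_shifted eqxx.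
apply/allP => j _; rewrite zcoord_shifted.
by case: (j =P i.+1) => [->|_]; case: (j =P i) => _; rewrite ?orbT ?eqxx.
Qed.

End ShiftedVertex.

End LargeModulus.

End Shifts.

Definition is_height (n m : nat) (u : seq int) (T : nat -> int) :=
  (n%:Z %| T 0%N - zcoord u 0)%Z /\
  forall j, (0 < j <= m)%N -> zcoord u j = T j - T j.-1.

Definition add_at (T : nat -> int) (i : nat) (e : int) : nat -> int :=
  fun p => if p == i then T p + e else T p.

Lemma sum_add_at N (T : nat -> int) i (e : int) : (i < N)%N ->
  \sum_(p < N) add_at T i e p = \sum_(p < N) T p + e.
Proof.
move=> hi; rewrite (bigD1 (Ordinal hi)) //= [in RHS](bigD1 (Ordinal hi)) //=.
rewrite /add_at eqxx addrAC; congr (_ + _ + _); apply: eq_bigr => p.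
by rewrite -val_eqE => /negbTE ->.
Qed.

Lemma adjacentP n m u u' : adjacent n m u u' ->
  exists i (e : int), (e = 1 \/ e = -1) /\ shift n m e i u u'.
Proof. by case/hasP => i _ /orP[] sh; exists i; [exists 1 | exists (-1)]; split; auto. Qed.

Lemma shift_adjacent n m (e : int) i u u' : e = 1 \/ e = -1 ->
  shift n m e i u u' -> adjacent n m u u'.
Proof.
move=> e_unit sh; have [_ _ hi _ _] := shiftP sh.
apply/hasP; exists i; first by rewrite mem_iota.
by rewrite /shift_at /Defs.lshift /Defs.rshift; case: e_unit sh => -> ->; rewrite ?orbT.
Qed.

Lemma is_wall_r_cons n m u u' s : is_wall n m (m.+1)%:Z u (u' :: s) =
  ~~ Defs.rshift n m m u u' && is_wall n m (m.+1)%:Z u' s.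
Proof. by rewrite /is_wall eqxx. Qed.

Lemma is_wall_l_cons n m u u' s : is_wall n m (-1) u (u' :: s) =
  ~~ Defs.lshift n m 0 u u' && is_wall n m (-1) u' s.
Proof. by rewrite /is_wall eqxx. Qed.

Section Heights.
Variables (n m : nat).

Lemma is_height_shift (e : int) i u u' (T : nat -> int) :
  shift n m e i u u' -> is_height n m u T -> is_height n m u' (add_at T i e).
Proof.
move=> /shiftP [_ _ hi [ui ui1] same] [T0 Tj]; split.
- rewrite /add_at; case: (eqVneq 0%N i) => [i0|i_gt0]; last by rewrite same //; apply/eqP; lia.
  rewrite -i0 in ui *; rewrite ui (_ : T 0%N + e - _ =
    (T 0%N - zcoord u 0) - (adj n m 0 (zcoord u 0 + e) - (zcoord u 0 + e))); last by ring.
  by rewrite rpredB ?adj_dvd.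
- move=> j hj; rewrite /add_at.
  case: (eqVneq j i) => [ji|ji].
    subst j; rewrite ui adj_inner // Tj // ifF; [ring | apply/eqP; lia].
  case: (eqVneq j i.+1) => [ji1|ji1].
    by subst j; rewrite ui1 adj_inner // Tj //= eqxx; ring.
  by rewrite same ?Tj // ?ifF //; apply/eqP; lia.
Qed.

Lemma is_height_zerov (T : nat -> int) : is_height n m (zerov m) T ->
  (n%:Z %| T 0%N)%Z /\ forall p, (p <= m)%N -> T p = T 0%N.
Proof.
rewrite /is_height zcoord_zerov subr0 => -[T0 Tj]; split => //.
elim=> // p IHp hp; have := Tj p.+1; rewrite zcoord_zerov /= -IHp; lia.
Qed.

Lemma sum_height_zerov (T : nat -> int) : is_height n m (zerov m) T ->
  \sum_(p < m.+1) T p = (m.+1)%:Z * T 0%N.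
Proof.
case/is_height_zerov => _ Tc; rewrite (eq_bigr (fun _ => T 0%N)) => [|p _]; last first.
  by rewrite Tc // -ltnS.
by rewrite sumr_const card_ord -mulr_natl natz.
Qed.

Lemma zerov_of_const_height u (T : nat -> int) (c : int) :
  is_vertex n m u -> is_height n m u T ->
  (forall p, (p <= m)%N -> T p = c) -> (n%:Z %| c)%Z -> u = zerov m.
Proof.
move=> hu [T0 Tj] Tc c_dvd; have [su u0 um1 _ su_dvd] := vertexP hu.
have inner0 j : (j <= m)%N -> zcoord u j = 0.
  case: j => [_|j hj]; last by rewrite Tj // !Tc //; lia.
  have : (n%:Z %| zcoord u 0)%Z.
    have -> : zcoord u 0 = c - (T 0%N - zcoord u 0) by rewrite Tc //; ring.
    exact: rpredB.
  by move/dvdz_cases; lia.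
have last0 : zcoord u m.+1 = 0.
  have : (n%:Z %| zcoord u m.+1)%Z.
    move: su_dvd; rewrite big_ord_recr big1 => [|j _]; last exact: inner0 (ltn_ord j).
    by rewrite /= -/(zcoord u m.+1) add0r.
  by move/dvdz_cases; lia.
apply: (@eq_from_nth _ 0); rewrite su ?size_nseq // => j hj.
rewrite -/(zcoord u j) -/(zcoord (zerov m) j) zcoord_zerov.
by case: (leqP j m) => [/inner0 //|?]; rewrite (_ : j = m.+1) //; lia.
Qed.

Lemma height_along_path u s (T : nat -> int) :
  path (adjacent n m) u s -> is_height n m u T ->
  exists T', [/\ is_height n m (last u s) T',
    \sum_(p < m.+1) T' p <= \sum_(p < m.+1) T p + (size s)%:Z,
    \sum_(p < m.+1) T p <= \sum_(p < m.+1) T' p + (size s)%:Z,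
    is_wall n m (m.+1)%:Z u s -> T m <= T' m
  & is_wall n m (-1) u s -> T' 0%N <= T 0%N].
Proof.
elim: s u T => [|u' s IHs] u T /=; first by exists T; split; rewrite ?addr0.
case/andP=> /adjacentP [i [e [e_unit sh]]] hpath hT.
have hi : (i <= m)%N by case/shiftP: sh.
have [T' [hT' sum_le sum_ge wall_r wall_l]] := IHs _ _ hpath (is_height_shift sh hT).
exists T'; split => //.
- by move: sum_le; rewrite sum_add_at //=; lia.
- by move: sum_ge; rewrite sum_add_at //=; lia.
- rewrite is_wall_r_cons => /andP [not_r /wall_r]; rewrite /add_at.
  case: eqP => [im|_ //]; subst i; case: e_unit => [e1|en1]; first by lia.
  by rewrite /Defs.rshift -en1 sh in not_r.
- rewrite is_wall_l_cons => /andP [not_l /wall_l]; rewrite /add_at.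
  case: eqP => [i0|_ //]; subst i; case: e_unit => [e1|en1]; last by lia.
  by rewrite /Defs.lshift -e1 sh in not_l.
Qed.

End Heights.

Definition shift_path n m (e : int) (u : seq int) (s : seq (seq int)) :=
  all (fun st => has (fun i => shift n m e i st.1 st.2) (iota 0 m.+1)) (steps u s).

Section Walls.
Variables (n m : nat).
Hypotheses (n_gt1 : (1 < n)%N) (m_gt0 : (1 <= m)%N).

Lemma wall_r_length_lb u s (T : nat -> int) : path (adjacent n m) u s -> last u s = zerov m ->
  is_wall n m (m.+1)%:Z u s -> is_height n m u T -> 1 <= T m ->
  \sum_(p < m.+1) (n%:Z - T p) <= (size s)%:Z.
Proof.
move=> hpath hlast hwall hT Tm.
have [T' [hT' le _ /(_ hwall) T'm _]] := height_along_path hpath hT.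
rewrite hlast in hT'; have [T'0 T'c] := is_height_zerov hT'.
have : n%:Z <= T' 0%N by move: T'm; rewrite T'c // => T'0_ge; have := dvdz_cases T'0; lia.
move: le; rewrite sumrB sumr_const card_ord -mulr_natr natz (sum_height_zerov hT').
by set ST := \sum_(p < m.+1) T p; nia.
Qed.

Lemma wall_l_length_lb u s (T : nat -> int) : path (adjacent n m) u s -> last u s = zerov m ->
  is_wall n m (-1) u s -> is_height n m u T -> T 0%N <= n%:Z - 1 ->
  \sum_(p < m.+1) T p <= (size s)%:Z.
Proof.
move=> hpath hlast hwall hT T0.
have [T' [hT' _ ge _ /(_ hwall) T'0]] := height_along_path hpath hT.
rewrite hlast in hT'; have [T'0_dvd _] := is_height_zerov hT'.
have : T' 0%N <= 0 by have := dvdz_cases T'0_dvd; lia.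
by move: ge; rewrite (sum_height_zerov hT'); nia.
Qed.

Lemma shift_path_wall_r u s : shift_path n m 1 u s -> is_wall n m (m.+1)%:Z u s.
Proof.
move=> /allP hs; rewrite /is_wall (_ : (m.+1)%:Z == -1 = false) // eqxx.
apply/allP => st /hs /hasP [i _ sh]; apply/negP => r.
by have := shift_dir_uniq n_gt1 m_gt0 (or_introl erefl) (or_intror erefl) sh r; lia.
Qed.

Lemma shift_path_wall_l u s : shift_path n m (-1) u s -> is_wall n m (-1) u s.
Proof.
move=> /allP hs; rewrite /is_wall eqxx.
apply/allP => st /hs /hasP [i _ sh]; apply/negP => l.
by have := shift_dir_uniq n_gt1 m_gt0 (or_intror erefl) (or_introl erefl) sh l; lia.
Qed.

End Walls.

Section Greedy.
Variables (n m : nat).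
Hypothesis n_gt1 : (1 < n)%N.
Variables (e c : int).
Hypotheses (e_unit : e = 1 \/ e = -1) (c_dvd : (n%:Z %| c)%Z).

Let gap (T : nat -> int) p := e * (c - T p).

Lemma sum_gap_add_at (T : nat -> int) i : (i <= m)%N ->
  \sum_(p < m.+1) gap (add_at T i e) p = \sum_(p < m.+1) gap T p - 1.
Proof.
move=> hi; rewrite /gap -!mulr_sumr !sumrB sum_add_at //.
by case: e_unit => ->; ring.
Qed.

Lemma gaps_eq0_const (T : nat -> int) : (forall p, (p <= m)%N -> 0 <= gap T p) ->
  \sum_(p < m.+1) gap T p = 0 -> forall p, (p <= m)%N -> T p = c.
Proof.
move=> gap_ge0 sum_gap p hp; have := @psumr_eq0P _ _ xpredT (fun q : 'I_m.+1 => gap T q).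
move=> /(_ (fun q _ => gap_ge0 q (ltn_ord q)) sum_gap (Ordinal (hp : (p < m.+1)%N)) isT).
by rewrite /gap /=; case: e_unit => ->; lia.
Qed.

(* Maximality of the gap at i means that u_i and u_(i+1) already lean against
   the direction e, so the shift keeps them in {-1, 0, 1}. *)
Lemma max_gap_shift u (T : nat -> int) i :
  is_vertex n m u -> is_height n m u T -> (i <= m)%N ->
  (forall p, (p <= m)%N -> gap T p <= gap T i) -> shift n m e i u (shifted n m u i e).
Proof.
move=> hu [_ Tj] hi gap_le; have [_ _ _ inner _] := vertexP hu.
apply: shift_shifted => // [i_gt0 | i_ltm].
- have := gap_le i.-1 (leq_trans (leq_pred _) hi); have := inner i.
  by rewrite /gap Tj ?i_gt0 //; case: e_unit => ->; lia.
- have := gap_le i.+1 i_ltm; have := inner i.+1.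
  by rewrite /gap Tj ?i_ltm //=; case: e_unit => ->; lia.
Qed.

Lemma greedy_shift_path k u (T : nat -> int) : is_vertex n m u -> is_height n m u T ->
  (forall p, (p <= m)%N -> 0 <= gap T p) -> \sum_(p < m.+1) gap T p = k%:Z ->
  exists s, [/\ path (adjacent n m) u s, last u s = zerov m,
                shift_path n m e u s & size s = k].
Proof.
elim: k u T => [|k IHk] u T hu hT gap_ge0 sum_gap.
  exists [::]; split => //.
  exact: zerov_of_const_height hu hT (gaps_eq0_const gap_ge0 sum_gap) c_dvd.
have [i hi gap_le] := ex_argmax_le m (gap T).
have gap_i : 0 < gap T i.
  rewrite ltNge; apply/negP => gap_le0.
  have : \sum_(p < m.+1) gap T p <= 0.
    by apply: sumr_le0 => p _; exact: le_trans (gap_le p (ltn_ord p)) gap_le0.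
  by rewrite sum_gap.
have sh := max_gap_shift hu hT hi gap_le.
have gap_ge0' p : (p <= m)%N -> 0 <= gap (add_at T i e) p.
  move=> hp; move: (gap_ge0 p hp); rewrite /gap /add_at.
  by case: eqP => [->|_ //]; move: gap_i; rewrite /gap; case: e_unit => ->; lia.
have sum_gap' : \sum_(p < m.+1) gap (add_at T i e) p = k%:Z.
  by rewrite sum_gap_add_at // sum_gap; lia.
have hu' : is_vertex n m (shifted n m u i e) by case/shiftP: sh.
have [s [hpath hlast hdir hsize]] := IHk _ _ hu' (is_height_shift sh hT) gap_ge0' sum_gap'.
exists (shifted n m u i e :: s); split => /=; last by rewrite hsize.
- by rewrite hpath andbT (shift_adjacent e_unit sh).
- exact: hlast.
- by apply/andP; split => //; apply/hasP; exists i; rewrite ?mem_iota.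
Qed.

End Greedy.

Section PathsAlongWalls.
Variables (n m : nat).
Hypotheses (n_gt1 : (1 < n)%N) (m_gt0 : (1 <= m)%N).

Lemma ps_wall_r u (T : nat -> int) : is_vertex n m u -> is_height n m u T ->
  (forall p, (p <= m)%N -> 1 <= T p <= n%:Z) ->
  ps_is n m (m.+1)%:Z u (\sum_(p < m.+1) (n%:Z - T p)).
Proof.
move=> hu hT T_bounds; set k := \sum_(p < m.+1) _.
have k_ge0 : 0 <= k by apply: sumr_ge0 => p _; have := T_bounds p (ltn_ord p); lia.
have gap_ge0 p : (p <= m)%N -> 0 <= 1 * (n%:Z - T p) by move/T_bounds; lia.
have sum_gap : \sum_(p < m.+1) 1 * (n%:Z - T p) = (absz k)%:Z.
  by rewrite gez0_abs //; apply: eq_bigr => p _; rewrite mul1r.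
have [s [hpath hlast hdir hsize]] :=
  greedy_shift_path n_gt1 (or_introl erefl) (dvdzz n%:Z) hu hT gap_ge0 sum_gap.
split.
- exists s; split; last by rewrite hsize gez0_abs.
  + by rewrite /is_path hu hpath hlast eqxx.
  + exact: shift_path_wall_r hdir.
- move=> s' /andP [/andP [_ hpath'] /eqP hlast'] hwall.
  by apply: wall_r_length_lb hpath' hlast' hwall hT _; have := T_bounds m (leqnn m); lia.
Qed.

Lemma ps_wall_l u (T : nat -> int) : is_vertex n m u -> is_height n m u T ->
  (forall p, (p <= m)%N -> 0 <= T p <= n%:Z - 1) ->
  ps_is n m (-1) u (\sum_(p < m.+1) T p).
Proof.
move=> hu hT T_bounds; set k := \sum_(p < m.+1) _.
have k_ge0 : 0 <= k by apply: sumr_ge0 => p _; have := T_bounds p (ltn_ord p); lia.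
have gap_ge0 p : (p <= m)%N -> 0 <= -1 * (0 - T p) by move/T_bounds; lia.
have sum_gap : \sum_(p < m.+1) -1 * (0 - T p) = (absz k)%:Z.
  by rewrite gez0_abs //; apply: eq_bigr => p _; rewrite mulN1r sub0r opprK.
have [s [hpath hlast hdir hsize]] :=
  greedy_shift_path n_gt1 (or_intror erefl) (dvdz0 n%:Z) hu hT gap_ge0 sum_gap.
split.
- exists s; split; last by rewrite hsize gez0_abs.
  + by rewrite /is_path hu hpath hlast eqxx.
  + exact: shift_path_wall_l hdir.
- move=> s' /andP [/andP [_ hpath'] /eqP hlast'] hwall.
  by apply: wall_l_length_lb hpath' hlast' hwall hT _; have := T_bounds 0%N (leq0n m); lia.
Qed.

End PathsAlongWalls.

Lemma dist_le_half n m u w s1 s2 : is_path n m u w s1 -> is_path n m u w s2 ->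
  exists d, dist_is n m u w d /\ (d <= (size s1 + size s2) %/ 2)%N.
Proof.
move=> hs1 hs2.
have [d [[s [hs <-]] dmin]] := @exists_minn (fun d => exists s, is_path n m u w s /\ size s = d)
  (ex_intro _ _ (ex_intro _ s1 (conj hs1 erefl))).
exists (size s); split; first by split; [exists s | move=> s' hs'; apply: dmin; exists s'].
have := dmin _ (ex_intro _ s1 (conj hs1 erefl)); have := dmin _ (ex_intro _ s2 (conj hs2 erefl)).
lia.
Qed.

Definition psum (v : seq int) (p : nat) : int := \sum_(i < p.+1) zcoord v i.

Lemma psumS v p : psum v p.+1 = psum v p + zcoord v p.+1.
Proof. by rewrite /psum big_ord_recr. Qed.

Lemma is_height_psum n m v : is_height n m v (psum v).
Proof.
split=> [|[|j] // _]; first by rewrite /psum big_ord1 subrr dvdz0.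
by rewrite psumS /=; ring.
Qed.

Lemma sum_psum (f : nat -> int) k :
  \sum_(p < k) \sum_(i < p.+1) f i = \sum_(i < k) ((k%:Z - i%:Z) * f i).
Proof.
elim: k => [|k IHk]; first by rewrite !big_ord0.
rewrite big_ord_recr /= IHk.
have -> : \sum_(i < k.+1) (((k.+1)%:Z - i%:Z) * f i) =
    \sum_(i < k.+1) ((k%:Z - i%:Z) * f i) + \sum_(i < k.+1) f i.
  by rewrite -big_split; apply: eq_bigr => i _ /=; rewrite intS; ring.
by rewrite [\sum_(i < k.+1) (_ * _)]big_ord_recr /= subrr mul0r addr0.
Qed.

Lemma sum_psum_compl (f : nat -> int) k :
  \sum_(p < k) (\sum_(i < k.+1) f i - \sum_(i < p.+1) f i) = \sum_(i < k.+1) (i%:Z * f i).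
Proof.
rewrite sumrB sum_psum sumr_const card_ord big_ord_recr /= -mulr_natl natz.
rewrite [in RHS]big_ord_recr /= mulrDr mulr_sumr addrAC -sumrB.
by congr (_ + _); apply: eq_bigr => i _; ring.
Qed.

Lemma psum_not_dvd n m v : (forall p : int, piv n m v p <-> p = -1 \/ p = (m.+1)%:Z) ->
  forall p, (p <= m)%N -> ~ (n%:Z %| psum v p)%Z.
Proof.
move=> hpiv p hp hdvd.
have : piv n m v p%:Z by split; [lia | rewrite (_ : absz (p%:Z + 1) = p.+1) // addrC -intS].
by case/hpiv; lia.
Qed.

Lemma psum_bounds n m v : is_vertex n m v ->
  (forall p, (p <= m)%N -> ~ (n%:Z %| psum v p)%Z) ->
  forall p, (p <= m)%N -> 1 <= psum v p <= n%:Z - 1.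
Proof.
move=> hv not_dvd; have [_ v0 _ inner _] := vertexP hv.
have S_neq0 p : (p <= m)%N -> psum v p <> 0.
  by move=> hp S0; apply: (not_dvd p hp); rewrite S0 dvdz0.
have S_neqn p : (p <= m)%N -> psum v p <> n%:Z.
  by move=> hp Sn; apply: (not_dvd p hp); rewrite Sn dvdzz.
elim=> [|p IHp] hp.
  have S0 : psum v 0 = zcoord v 0 := big_ord1 _ _.
  by move: (S_neq0 0%N hp); rewrite S0; lia.
have := IHp (ltnW hp); have := inner p.+1 hp; have := S_neq0 _ hp; have := S_neqn _ hp.
by rewrite psumS; lia.
Qed.

Lemma psum_last n m v : is_vertex n m v -> 1 <= psum v m <= n%:Z - 1 -> psum v m.+1 = n%:Z.
Proof.
move=> hv Sm; have [_ _ vm1 _ /dvdzP [q hq]] := vertexP hv.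
move: hq; rewrite -/(psum v m.+1) => hq; rewrite hq.
have : q = 1 by move: hq; rewrite psumS => hq; case: (ltgtP q 1) => // q1; nia.
by move->; rewrite mul1r.
Qed.

Theorem lemma5p15 (n m : nat) (v : seq int) :
  (1 < n)%N -> (1 <= m)%N -> is_vertex n m v ->
  (forall p : int, piv n m v p <-> (p = -1 \/ p = (m.+1)%:Z)) ->
  [/\ ps_is n m (m.+1)%:Z v (\sum_(i < m.+2) (i%:Z * zcoord v i)),
      ps_is n m (-1) v (\sum_(i < m.+2) (((m.+1)%:Z - i%:Z) * zcoord v i))
    & exists d, dist_is n m v (zerov m) d /\ (d <= (n * m.+1) %/ 2)%N].
Proof.
move=> n_gt1 m_gt0 hv hpiv.
have S_bounds := psum_bounds hv (psum_not_dvd hpiv).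
have S_last := psum_last hv (S_bounds m (leqnn m)).
have hS := is_height_psum n m v.
have -> : \sum_(i < m.+2) (i%:Z * zcoord v i) = \sum_(p < m.+1) (n%:Z - psum v p).
  by rewrite -(sum_psum_compl (zcoord v) m.+1) -S_last.
have -> : \sum_(i < m.+2) (((m.+1)%:Z - i%:Z) * zcoord v i) = \sum_(p < m.+1) psum v p.
  by rewrite sum_psum big_ord_recr /= subrr mul0r addr0.
have ps_r : ps_is n m (m.+1)%:Z v (\sum_(p < m.+1) (n%:Z - psum v p)).
  by apply: ps_wall_r => // p /S_bounds; lia.
have ps_l : ps_is n m (-1) v (\sum_(p < m.+1) psum v p).
  by apply: ps_wall_l => // p /S_bounds; lia.
split => //.
have [[s1 [hs1 _ size1]] _] := ps_r; have [[s2 [hs2 _ size2]] _] := ps_l.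
have [d [hd d_le]] := dist_le_half hs1 hs2.
exists d; split => //; rewrite (_ : (n * m.+1)%N = size s1 + size s2) //.
apply/eqP; rewrite -eqz_nat PoszD size1 size2 -big_split /=.
under eq_bigr do rewrite subrK.
by rewrite sumr_const card_ord -mulr_natr natz PoszM.
Qed.
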